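(* Let $k$ be an odd positive integer, $\ell\in\{0,1,2,\ldots\}$ and $a$ real. Whenever all the arguments of $\tilde\gamma_\cdot$ below are positive, one has $$\sum_{r=1}^{k}(-1)^{r-1}\tilde\gamma_\ell\left(\frac rk-a\right)=k\sum_{j=0}^{\ell}(-1)^j\binom{\ell}{j}\tilde\gamma_{\ell-j}(1-ak)\log^jk,$$ and, if in addition $a>0$, $$\sum_{r=1}^{k}(-1)^{r-1}\tilde\gamma_\ell\left(\frac rk+a\right)=k\sum_{j=0}^{\ell-1}(-1)^j\binom{\ell}{j}\tilde\gamma_{\ell-j}(1+ak)\log^jk+k(-1)^\ell\tilde\psi(ak)\log^\ell k+\frac{(-1)^\ell}{a}\log^\ell k.$$
   Context: For $q>0$, $\zeta_E(z,q)=\sum_{n=0}^\infty (-1)^n (n+q)^{-z}$ for $\mathrm{Re}(z)>0$, extended by analytic continuation to an entire function of $z$. The modified Stieltjes constants $\tilde\gamma_m(q)$ are defined by the Taylor expansion $\zeta_E(z,q)=\sum_{m=0}^\infty\frac{(-1)^m\tilde\gamma_m(q)}{m!}(z-1)^m$. The modified digamma function is $\tilde\psi(q):=-\tilde\gamma_0(q)=-\zeta_E(1,q)$. Convention: $\log^0 k=1$. *)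

From Stdlib Require Import Reals Lra Lia.
From Coquelicot Require Import Coquelicot.
Open Scope R_scope.

Fixpoint fsum (n : nat) (f : nat -> R) : R :=
  match n with
  | O => 0
  | S m => fsum m f + f m
  end.

(* Alternating Hurwitz zeta  zeta_E(z,q) = sum_{n>=0} (-1)^n (n+q)^{-z},
   as the limit of partial sums (Coquelicot's Series); this is the
   defining series, valid (convergent) for real z > 0, q > 0. *)
Definition zetaE (z q : R) : R :=
  Series (fun n => (-1) ^ n * Rpower (INR n + q) (- z)).

(* Modified Stieltjes constants: zeta_E(z,q) = sum_m (-1)^m gt_m(q)/m! (z-1)^m,
   i.e. gt_m(q) = (-1)^m * (d/dz)^m zeta_E(z,q) at z = 1 (the entire function
   is real-analytic on the real axis, so its Taylor coefficients at the real
   point 1 are given by the real derivatives of its restriction to z > 0). *)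
Definition gammaT (m : nat) (q : R) : R :=
  (-1) ^ m * Derive_n (fun z => zetaE z q) m 1.

Definition psiT (q : R) : R := - gammaT 0 q.

From Stdlib Require Import Reals Lra Lia FunctionalExtensionality.
From Coquelicot Require Import Coquelicot.
Open Scope R_scope.

(* For z > 1/2 the tails of the alternating series for the z-derivatives of
   zeta_E(z, q) are, far enough out, bounded by their first term uniformly in z,
   so the series may be differentiated termwise and
     gt_m(q) = sum_n (-1)^n log^m (n + q) / (n + q).
   Split the series  k sum_m (-1)^m (log k - log (m + c))^l / (m + c)  along the
   residue classes m = k n + i: since k is odd, (-1)^(k n + i) = (-1)^(n + i), and
   the classes give (-1)^l sum_i (-1)^i gt_l((i + c) / k); expanding the binomial
   instead gives (-1)^l k sum_j (-1)^j C(l, j) log^j k gt_(l-j)(c).  Take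
   c = 1 - a k, resp. c = 1 + a k; in the second case the term j = l is rewritten
   with the recurrence  psi~(q + 1) = - psi~(q) - 1/q. *)

Lemma fsum_ext n f g : (forall i, (i < n)%nat -> f i = g i) -> fsum n f = fsum n g.
Proof.
  induction n as [|n IH]; intros H; simpl; [reflexivity|].
  rewrite IH by (intros; apply H; lia). rewrite H by lia. reflexivity.
Qed.

Lemma fsum_zero n : fsum n (fun _ => 0) = 0.
Proof. induction n as [|n IH]; simpl; [reflexivity|]. rewrite IH. ring. Qed.

Lemma fsum_plus n f g : fsum n (fun i => f i + g i) = fsum n f + fsum n g.
Proof. induction n as [|n IH]; simpl; [ring|]. rewrite IH. ring. Qed.

Lemma fsum_scal n c f : c * fsum n f = fsum n (fun i => c * f i).
Proof. induction n as [|n IH]; simpl; [ring|]. rewrite <- IH. ring. Qed.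

Lemma fsum_add m n f : fsum (m + n) f = fsum m f + fsum n (fun i => f (m + i)%nat).
Proof.
  induction n as [|n IH]; simpl.
  - rewrite Nat.add_0_r. ring.
  - rewrite Nat.add_succ_r. simpl. rewrite IH. ring.
Qed.

Lemma fsum_S_l n f : fsum (S n) f = f O + fsum n (fun i => f (S i)).
Proof. induction n as [|n IH]; simpl in *; [ring|]. rewrite IH. ring. Qed.

Lemma fsum_exchange m n (s : nat -> nat -> R) :
  fsum m (fun i => fsum n (s i)) = fsum n (fun j => fsum m (fun i => s i j)).
Proof.
  induction n as [|n IH]; simpl.
  - apply fsum_zero.
  - rewrite fsum_plus, IH. reflexivity.
Qed.

Lemma fsum_blocks k N v :
  fsum (k * N) v = fsum k (fun i => fsum N (fun n => v (k * n + i)%nat)).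
Proof.
  induction N as [|N IH]; simpl.
  - rewrite Nat.mul_0_r, fsum_zero. reflexivity.
  - rewrite fsum_plus, <- IH, Nat.mul_succ_r, fsum_add. reflexivity.
Qed.

Lemma sum_f_R0_fsum f n : sum_f_R0 f n = fsum (S n) f.
Proof. induction n as [|n IH]; simpl in *; [ring|]. rewrite IH. ring. Qed.

Lemma sum_n_fsum a n : sum_n a n = fsum (S n) a.
Proof.
  induction n as [|n IH].
  - rewrite sum_O. simpl. symmetry. apply Rplus_0_l.
  - rewrite sum_Sn, IH. reflexivity.
Qed.

Lemma Series_fsum a : Series a = Lim_seq (fun N => fsum N a).
Proof.
  unfold Series. rewrite <- (Lim_seq_incr_1 (fun N => fsum N a)).
  f_equal. apply Lim_seq_ext. intros n. apply sum_n_fsum.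
Qed.

Lemma alternating_fsum_bounds (c : nat -> R) m :
  (forall i, 0 <= c (S i) <= c i) ->
  0 <= fsum m (fun i => (-1) ^ i * c i) <= c O.
Proof.
  revert c. induction m as [|m IH]; intros c Hc.
  - specialize (Hc O). simpl. lra.
  - rewrite fsum_S_l.
    replace (fsum m (fun i => (-1) ^ S i * c (S i)))
      with (-1 * fsum m (fun i => (-1) ^ i * c (S i)))
      by (rewrite fsum_scal; apply fsum_ext; intros; simpl; ring).
    destruct (IH (fun i => c (S i))) as [Hlo Hhi]; [intros; apply Hc|].
    specialize (Hc O). simpl. lra.
Qed.

Lemma is_lim_seq_unique_fin (u : nat -> R) (x y : R) :
  is_lim_seq u x -> is_lim_seq u y -> x = y.
Proof.
  intros Hx Hy. apply is_lim_seq_unique in Hx, Hy. congruence.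
Qed.

Lemma is_lim_seq_scal_l_fin (u : nat -> R) (a l : R) :
  is_lim_seq u l -> is_lim_seq (fun n => a * u n) (a * l).
Proof. apply (is_lim_seq_scal_l u a l). Qed.

Lemma is_lim_seq_fsum k (w : nat -> nat -> R) (W : nat -> R) :
  (forall i, (i < k)%nat -> is_lim_seq (w i) (W i)) ->
  is_lim_seq (fun N => fsum k (fun i => w i N)) (fsum k W).
Proof.
  induction k as [|k IH]; intros H; simpl.
  - apply is_lim_seq_const.
  - apply is_lim_seq_plus'; [apply IH; intros; apply H; lia | apply H; lia].
Qed.

Lemma is_lim_seq_fsum_blocks k v (V : R) (W : nat -> R) :
  (0 < k)%nat ->
  is_lim_seq (fun N => fsum N v) V ->
  (forall i, (i < k)%nat ->
     is_lim_seq (fun N => fsum N (fun n => v (k * n + i)%nat)) (W i)) ->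
  fsum k W = V.
Proof.
  intros Hk HV HW.
  apply (is_lim_seq_unique_fin (fun N => fsum (k * N) v)).
  - apply (is_lim_seq_ext (fun N => fsum k (fun i => fsum N (fun n => v (k * n + i)%nat)))).
    + intros N. symmetry. apply fsum_blocks.
    + apply is_lim_seq_fsum. exact HW.
  - apply (is_lim_seq_subseq (fun N => fsum N v) V (fun N => (k * N)%nat)); [|exact HV].
    intros P [N HN]. exists N. intros n Hn. apply HN. nia.
Qed.

Lemma exp_le_compat x y : x <= y -> exp x <= exp y.
Proof. intros [Hlt | ->]; [left; apply exp_increasing, Hlt | right; reflexivity]. Qed.

Lemma pow_1_plus_le_exp u n : 0 <= u -> (1 + u) ^ n <= exp (INR n * u).
Proof.
  intros Hu.
  replace (exp (INR n * u)) with (exp u ^ n).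
  - apply pow_incr. pose proof (exp_ineq1_le u). lra.
  - rewrite <- Rpower_pow by apply exp_pos. unfold Rpower. rewrite ln_exp. reflexivity.
Qed.

Lemma pow_mul_exp_antitone n z L1 L2 :
  0 < L1 -> INR n <= z * L1 -> L1 <= L2 ->
  L2 ^ n * exp (- z * L2) <= L1 ^ n * exp (- z * L1).
Proof.
  intros HL1 Hn H12.
  set (u := (L2 - L1) / L1).
  assert (Hu : 0 <= u) by (unfold u; apply Rdiv_le_0_compat; lra).
  assert (HL2 : L2 = L1 * (1 + u)) by (unfold u; field; lra).
  assert (Hgrowth : (1 + u) ^ n <= exp (z * (L2 - L1))).
  { eapply Rle_trans; [apply pow_1_plus_le_exp, Hu|]. apply exp_le_compat.
    replace (z * (L2 - L1)) with (z * L1 * u) by (unfold u; field; lra).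
    apply Rmult_le_compat_r; assumption. }
  rewrite HL2 at 1. rewrite Rpow_mult_distr, Rmult_assoc.
  apply Rmult_le_compat_l; [apply pow_le; lra|].
  apply Rle_trans with (exp (z * (L2 - L1)) * exp (- z * L2)).
  - apply Rmult_le_compat_r; [apply Rlt_le, exp_pos | exact Hgrowth].
  - rewrite <- exp_plus. right. f_equal. ring.
Qed.

Lemma pow_le_mul_exp L A n : 0 <= L -> 0 < A -> L ^ n <= A ^ n * exp (INR n * L / A).
Proof.
  intros HL HA.
  replace (L ^ n) with (A ^ n * (L / A) ^ n)
    by (rewrite <- Rpow_mult_distr; f_equal; field; lra).
  apply Rmult_le_compat_l; [apply pow_le; lra|].
  assert (HLA : 0 <= L / A) by (apply Rdiv_le_0_compat; lra).
  replace (INR n * L / A) with (INR n * (L / A)) by (field; lra).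
  eapply Rle_trans; [|apply pow_1_plus_le_exp, HLA].
  apply pow_incr. lra.
Qed.

Lemma pow_mul_exp_half_small n eps : 0 < eps ->
  exists M, forall L, M <= L -> L ^ n * exp (- (1/2) * L) < eps.
Proof.
  intros Heps.
  set (A := 4 * (INR n + 1)).
  set (C := A ^ n).
  assert (HA : 0 < A) by (unfold A; pose proof (pos_INR n); lra).
  assert (HC : 0 < C) by (apply pow_lt; lra).
  exists (Rmax 0 (- 4 * ln (eps / C)) + 1). intros L HL.
  pose proof (Rmax_l 0 (- 4 * ln (eps / C))).
  pose proof (Rmax_r 0 (- 4 * ln (eps / C))).
  assert (HLA : 0 <= L / A) by (apply Rdiv_le_0_compat; lra).
  apply Rle_lt_trans with (C * exp (- (L / 4))).
  - apply Rle_trans with (C * exp (INR n * L / A) * exp (- (1/2) * L)).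
    + apply Rmult_le_compat_r; [apply Rlt_le, exp_pos | apply pow_le_mul_exp; lra].
    + rewrite Rmult_assoc, <- exp_plus.
      apply Rmult_le_compat_l; [lra|]. apply exp_le_compat.
      replace (INR n * L / A + - (1/2) * L) with (- (L / 4) - L / A)
        by (unfold A; field; pose proof (pos_INR n); lra).
      lra.
  - assert (Hexp : exp (- (L / 4)) < eps / C).
    { rewrite <- (exp_ln (eps / C)) by (apply Rdiv_lt_0_compat; lra).
      apply exp_increasing. lra. }
    apply (Rmult_lt_compat_l C) in Hexp; [|lra].
    replace (C * (eps / C)) with eps in Hexp by (field; lra). exact Hexp.
Qed.

Definition zetaE_term (j : nat) (q z : R) (n : nat) : R :=
  (-1) ^ n * ((- ln (INR n + q)) ^ j * exp (- z * ln (INR n + q))).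

Definition zetaE_partial (j : nat) (q : R) (N : nat) (z : R) : R :=
  fsum N (zetaE_term j q z).

Definition zetaE_deriv (j : nat) (q z : R) : R := Series (zetaE_term j q z).

Lemma zetaE_term_tail_le j q z n m :
  0 < q -> 0 <= z -> 0 < ln (INR n + q) -> INR j <= z * ln (INR n + q) ->
  Rabs (fsum m (fun i => zetaE_term j q z (n + i))) <=
  ln (INR n + q) ^ j * exp (- z * ln (INR n + q)).
Proof.
  intros Hq Hz HLn Hj.
  set (L := fun i : nat => ln (INR (n + i) + q)).
  set (c := fun i => L i ^ j * exp (- z * L i)).
  assert (HL : forall i, ln (INR n + q) <= L i <= L (S i)).
  { intros i. unfold L. rewrite !plus_INR, S_INR.
    pose proof (pos_INR n). pose proof (pos_INR i).
    split; apply ln_le; lra. }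
  assert (Hc : forall i, 0 <= c (S i) <= c i).
  { intros i. destruct (HL i) as [HL1 HL2]. split.
    - apply Rmult_le_pos; [apply pow_le; lra | apply Rlt_le, exp_pos].
    - apply pow_mul_exp_antitone; [lra | | exact HL2].
      eapply Rle_trans; [exact Hj | apply Rmult_le_compat_l; assumption]. }
  replace (fsum m (fun i => zetaE_term j q z (n + i)))
    with ((-1) ^ j * (-1) ^ n * fsum m (fun i => (-1) ^ i * c i)).
  2: { rewrite fsum_scal. apply fsum_ext. intros i _.
       unfold zetaE_term, c, L.
       replace (- ln (INR (n + i) + q)) with (-1 * ln (INR (n + i) + q)) by ring.
       rewrite Rpow_mult_distr, pow_add. ring. }
  rewrite !Rabs_mult, !pow_1_abs, !Rmult_1_l.
  destruct (alternating_fsum_bounds c m Hc) as [Hlo Hhi].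
  rewrite Rabs_pos_eq by exact Hlo.
  unfold c, L in Hhi. rewrite Nat.add_0_r in Hhi. exact Hhi.
Qed.

Lemma zetaE_partial_CVU_cauchy j q :
  0 < q -> CVU_cauchy (zetaE_partial j q) (fun z => 1/2 < z).
Proof.
  intros Hq eps.
  destruct (pow_mul_exp_half_small j eps (cond_pos eps)) as [M HM].
  set (K := Rmax (2 * INR j + 1) M).
  assert (HKj : 2 * INR j + 1 <= K) by apply Rmax_l.
  assert (HKM : M <= K) by apply Rmax_r.
  pose proof (pos_INR j).
  destruct (INR_unbounded (exp K)) as [N0 HN0].
  exists N0.
  assert (HK : forall n, (N0 <= n)%nat -> K < ln (INR n + q)).
  { intros n Hn. rewrite <- (ln_exp K).
    apply ln_increasing; [apply exp_pos|]. apply le_INR in Hn. lra. }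
  assert (Htail : forall n m z, 1/2 < z -> (N0 <= n)%nat ->
            Rabs (zetaE_partial j q n z - zetaE_partial j q (n + m) z) < eps).
  { intros n m z Hz Hn. specialize (HK n Hn).
    unfold zetaE_partial. rewrite fsum_add.
    set (tail := fsum m _).
    replace (fsum n (zetaE_term j q z) - (fsum n (zetaE_term j q z) + tail))
      with (- tail) by ring.
    rewrite Rabs_Ropp.
    assert (Hhalf : (1/2) * ln (INR n + q) <= z * ln (INR n + q))
      by (apply Rmult_le_compat_r; lra).
    eapply Rle_lt_trans; [apply zetaE_term_tail_le; lra|].
    eapply Rle_lt_trans; [|apply (HM (ln (INR n + q))); lra].
    apply Rmult_le_compat_l; [apply pow_le; lra|].
    apply exp_le_compat. lra. }
  intros n m z Hz Hn Hm.
  destruct (Nat.le_ge_cases n m) as [Hnm | Hmn].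
  - replace m with (n + (m - n))%nat by lia. apply Htail; assumption.
  - rewrite Rabs_minus_sym. replace n with (m + (n - m))%nat by lia.
    apply Htail; assumption.
Qed.

Lemma zetaE_partial_CVU j q :
  0 < q -> CVU_dom (zetaE_partial j q) (fun z => 1/2 < z).
Proof. intros Hq. apply CVU_dom_cauchy, zetaE_partial_CVU_cauchy, Hq. Qed.

Lemma is_lim_seq_zetaE_partial j q z : 0 < q -> 1/2 < z ->
  is_lim_seq (fun N => zetaE_partial j q N z) (zetaE_deriv j q z).
Proof.
  intros Hq Hz.
  destruct (CVU_CVS_dom _ _ (zetaE_partial_CVU j q Hq) z Hz) as [l Hl].
  replace (zetaE_deriv j q z) with l; [exact Hl|].
  unfold zetaE_deriv. rewrite Series_fsum.
  symmetry. exact (f_equal real (is_lim_seq_unique _ _ Hl)).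
Qed.

Lemma zetaE_partial_derive j q N z :
  is_derive (zetaE_partial j q N) z (zetaE_partial (S j) q N z).
Proof.
  unfold zetaE_partial. induction N as [|N IH]; simpl.
  - apply (is_derive_const 0 z).
  - apply (is_derive_plus (fun z => fsum N (zetaE_term j q z)) (fun z => zetaE_term j q z N));
      [exact IH|].
    unfold zetaE_term. auto_derive; [exact I|]. simpl. ring.
Qed.

Lemma is_derive_zetaE_deriv j q x : 0 < q -> 1/2 < x ->
  is_derive (zetaE_deriv j q) x (zetaE_deriv (S j) q x).
Proof.
  intros Hq Hx.
  assert (HD : (fun N y => Derive (zetaE_partial j q N) y) = zetaE_partial (S j) q).
  { do 2 (apply functional_extensionality; intro).
    apply is_derive_unique, zetaE_partial_derive. }
  assert (Hcont : forall N y, 1/2 < y -> continuity_pt (Derive (zetaE_partial j q N)) y).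
  { intros N y _.
    apply continuity_pt_ext with (zetaE_partial (S j) q N);
      [intros; symmetry; apply is_derive_unique, zetaE_partial_derive|].
    apply continuity_pt_filterlim, (ex_derive_continuous (zetaE_partial (S j) q N)).
    eexists. apply zetaE_partial_derive. }
  pose proof (CVU_Derive (zetaE_partial j q) (fun z => 1/2 < z) (open_gt _)
    ltac:(intros a b y Ha Hb Hy; lra) (zetaE_partial_CVU j q Hq)
    ltac:(intros N y _; eexists; apply zetaE_partial_derive) Hcont
    ltac:(rewrite HD; apply zetaE_partial_CVU, Hq) x Hx) as H.
  rewrite (Lim_seq_ext _ (fun N => zetaE_partial (S j) q N x)) in H
    by (intros; apply is_derive_unique, zetaE_partial_derive).
  unfold zetaE_deriv at 2. rewrite Series_fsum.
  apply (is_derive_ext (fun y => real (Lim_seq (fun N => zetaE_partial j q N y))));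
    [intros; symmetry; apply Series_fsum | exact H].
Qed.

Lemma Derive_n_zetaE q m x : 0 < q -> 1/2 < x ->
  Derive_n (fun z => zetaE z q) m x = zetaE_deriv m q x.
Proof.
  intros Hq. revert x. induction m as [|m IH]; intros x Hx; simpl.
  - unfold zetaE, zetaE_deriv, zetaE_term, Rpower.
    apply Series_ext. intros n. simpl. ring.
  - rewrite (Derive_ext_loc _ (zetaE_deriv m q)).
    + apply is_derive_unique, is_derive_zetaE_deriv; assumption.
    + apply (filter_imp (fun y => 1/2 < y)); [intros; apply IH; assumption|].
      apply (open_gt _ x Hx).
Qed.

Lemma gammaT_zetaE_deriv m q : 0 < q -> gammaT m q = (-1) ^ m * zetaE_deriv m q 1.
Proof. intros Hq. unfold gammaT. rewrite Derive_n_zetaE by lra. reflexivity. Qed.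

Lemma pow_1_mul_odd k n : Nat.Odd k -> (-1) ^ (k * n) = (-1) ^ n.
Proof.
  intros [p ->]. rewrite pow_mult.
  replace (2 * p + 1)%nat with (S (2 * p)) by lia. rewrite pow_1_odd. reflexivity.
Qed.

Lemma zetaE_deriv_multiplication k l c z : Nat.Odd k -> 0 < c -> 1/2 < z ->
  fsum k (fun i => (-1) ^ i * zetaE_deriv l ((INR i + c) / INR k) z)
  = Rpower (INR k) z
    * fsum (S l) (fun j => Binomial.C l j * ln (INR k) ^ j * zetaE_deriv (l - j) c z).
Proof.
  intros Hk Hc Hz.
  assert (Hk0 : (0 < k)%nat) by (destruct Hk; lia).
  assert (HkR : 0 < INR k) by (apply lt_0_INR, Hk0).
  set (v := fun m : nat => Rpower (INR k) z * ((-1) ^ m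
              * ((ln (INR k) + - ln (INR m + c)) ^ l * exp (- z * ln (INR m + c))))).
  apply (is_lim_seq_fsum_blocks k v); [exact Hk0 | |].
  - apply (is_lim_seq_ext (fun N => Rpower (INR k) z * fsum (S l) (fun j =>
             fsum N (fun m => Binomial.C l j * ln (INR k) ^ j * zetaE_term (l - j) c z m)))).
    + intros N.
      rewrite <- (fsum_exchange N (S l)
                    (fun m j => Binomial.C l j * ln (INR k) ^ j * zetaE_term (l - j) c z m)).
      rewrite fsum_scal. apply fsum_ext. intros m _.
      unfold v. rewrite binomial, sum_f_R0_fsum. f_equal.
      replace ((-1) ^ m * (fsum (S l) (fun i => Binomial.C l i * ln (INR k) ^ i
                 * (- ln (INR m + c)) ^ (l - i)) * exp (- z * ln (INR m + c))))
        with (((-1) ^ m * exp (- z * ln (INR m + c))) * fsum (S l) (fun i =>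
                 Binomial.C l i * ln (INR k) ^ i * (- ln (INR m + c)) ^ (l - i))) by ring.
      rewrite fsum_scal. apply fsum_ext. intros j _. unfold zetaE_term. ring.
    + apply is_lim_seq_scal_l_fin, is_lim_seq_fsum. intros j _.
      apply (is_lim_seq_ext (fun N => Binomial.C l j * ln (INR k) ^ j
                                      * zetaE_partial (l - j) c N z));
        [intros; apply fsum_scal|].
      apply is_lim_seq_scal_l_fin, is_lim_seq_zetaE_partial; assumption.
  - intros i _.
    set (qi := (INR i + c) / INR k).
    assert (Hqi : 0 < qi) by (unfold qi; pose proof (pos_INR i);
                              apply Rdiv_lt_0_compat; lra).
    apply (is_lim_seq_ext (fun N => (-1) ^ i * zetaE_partial l qi N z)).
    + intros N. unfold zetaE_partial. rewrite fsum_scal. apply fsum_ext. intros n _.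
      assert (Hn : 0 < INR n + qi) by (pose proof (pos_INR n); lra).
      assert (E : INR (k * n + i) + c = INR k * (INR n + qi))
        by (rewrite plus_INR, mult_INR; unfold qi; field; lra).
      unfold v, zetaE_term, Rpower.
      rewrite E, ln_mult, pow_add, pow_1_mul_odd by assumption.
      replace (ln (INR k) + - (ln (INR k) + ln (INR n + qi))) with (- ln (INR n + qi))
        by ring.
      replace (- z * (ln (INR k) + ln (INR n + qi)))
        with (- (z * ln (INR k)) + - z * ln (INR n + qi)) by ring.
      rewrite exp_plus, exp_Ropp. field. apply Rgt_not_eq, exp_pos.
    + apply is_lim_seq_scal_l_fin, is_lim_seq_zetaE_partial; assumption.
Qed.

Lemma gammaT_multiplication k l c : Nat.Odd k -> 0 < c ->
  fsum k (fun i => (-1) ^ i * gammaT l ((INR i + c) / INR k))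
  = INR k * fsum (S l) (fun j => (-1) ^ j * Binomial.C l j
                                 * gammaT (l - j) c * ln (INR k) ^ j).
Proof.
  intros Hk Hc.
  assert (HkR : 0 < INR k) by (apply lt_0_INR; destruct Hk; lia).
  rewrite (fsum_ext (S l) _
             (fun j => (-1) ^ l * (Binomial.C l j * ln (INR k) ^ j * zetaE_deriv (l - j) c 1))).
  2: { intros j Hj. rewrite gammaT_zetaE_deriv by exact Hc.
       replace ((-1) ^ l) with ((-1) ^ j * (-1) ^ (l - j))
         by (rewrite <- pow_add; f_equal; lia).
       ring. }
  rewrite (fsum_ext k _ (fun i => (-1) ^ l * ((-1) ^ i * zetaE_deriv l ((INR i + c) / INR k) 1))).
  2: { intros i _. rewrite gammaT_zetaE_deriv; [ring|].
       pose proof (pos_INR i). apply Rdiv_lt_0_compat; lra. }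
  rewrite <- !fsum_scal, zetaE_deriv_multiplication, Rpower_1 by (auto; lra).
  ring.
Qed.

Lemma zetaE_deriv_succ j q z : 0 < q -> 1/2 < z ->
  zetaE_deriv j (1 + q) z = zetaE_term j q z 0 - zetaE_deriv j q z.
Proof.
  intros Hq Hz.
  assert (Hshift : is_lim_seq (fun N => zetaE_partial j q (S N) z)
                     (zetaE_term j q z 0 + -1 * zetaE_deriv j (1 + q) z)).
  { apply (is_lim_seq_ext (fun N => zetaE_term j q z 0 + -1 * zetaE_partial j (1 + q) N z)).
    - intros N. unfold zetaE_partial. rewrite fsum_S_l, fsum_scal. f_equal.
      apply fsum_ext. intros n _. unfold zetaE_term.
      rewrite S_INR. replace (INR n + 1 + q) with (INR n + (1 + q)) by ring.
      simpl. ring.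
    - apply is_lim_seq_plus'; [apply is_lim_seq_const|].
      apply is_lim_seq_scal_l_fin, is_lim_seq_zetaE_partial; lra. }
  pose proof (is_lim_seq_zetaE_partial j q z Hq Hz) as Hlim.
  apply is_lim_seq_incr_1 in Hlim.
  pose proof (is_lim_seq_unique_fin _ _ _ Hlim Hshift). lra.
Qed.

Lemma psiT_succ q : 0 < q -> psiT (1 + q) = - psiT q - / q.
Proof.
  intros Hq. unfold psiT. rewrite !gammaT_zetaE_deriv by lra.
  rewrite zetaE_deriv_succ by lra.
  unfold zetaE_term. simpl. rewrite Rplus_0_l.
  replace (- (1) * ln q) with (- ln q) by ring.
  rewrite exp_Ropp, exp_ln by exact Hq. ring.
Qed.

Theorem proposition5p6 (k l : nat) (a : R) :
  Nat.Odd k ->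
  ((forall r : nat, (1 <= r <= k)%nat -> 0 < INR r / INR k - a) ->
   0 < 1 - a * INR k ->
   fsum k (fun i => (-1) ^ i * gammaT l (INR (S i) / INR k - a))
   = INR k * fsum (S l) (fun j => (-1) ^ j * Binomial.C l j
                      * gammaT (l - j) (1 - a * INR k) * ln (INR k) ^ j))
  /\
  (0 < a ->
   fsum k (fun i => (-1) ^ i * gammaT l (INR (S i) / INR k + a))
   = INR k * fsum l (fun j => (-1) ^ j * Binomial.C l j
                      * gammaT (l - j) (1 + a * INR k) * ln (INR k) ^ j)
     + INR k * (-1) ^ l * psiT (a * INR k) * ln (INR k) ^ l
     + (-1) ^ l / a * ln (INR k) ^ l).
Proof.
  intros Hk.
  assert (HkR : 0 < INR k) by (apply lt_0_INR; destruct Hk; lia).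
  split.
  - (* positivity of every r/k - a already follows from 0 < 1 - a k *)
    intros _ Hc.
    rewrite (fsum_ext k _ (fun i => (-1) ^ i * gammaT l ((INR i + (1 - a * INR k)) / INR k))).
    + apply gammaT_multiplication; assumption.
    + intros i _. rewrite S_INR. do 2 f_equal. field. lra.
  - intros Ha.
    assert (Hak : 0 < a * INR k) by nra.
    rewrite (fsum_ext k _ (fun i => (-1) ^ i * gammaT l ((INR i + (1 + a * INR k)) / INR k))).
    2: { intros i _. rewrite S_INR. do 2 f_equal. field. lra. }
    rewrite gammaT_multiplication by (auto; lra).
    cbn [fsum]. rewrite C_n_n, Nat.sub_diag.
    replace (gammaT 0 (1 + a * INR k)) with (- psiT (1 + a * INR k)) by (unfold psiT; ring).
    rewrite psiT_succ by exact Hak.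
    field. lra.
Qed.
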